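(* Let $a>0$, $b>0$, $c>0$ and consider the equation $u_t+ax^2u_{xx}+bx^3u_{xx}^2+cxu_x-cu=0$ for $t>0$, $x>0$. Let $c_1,c_2$ be arbitrary real constants and $\varepsilon,\delta\in\{1,-1\}$. Each of the following functions is an exact solution: (1) $u=c_1e^{ct}+\frac{a}{2b}x\left(c_2+\frac{a+2c}{2}t-\log x\right)$; (2) $u=(c_1-ct)e^{ct}+4\delta e^{\frac c2t}\sqrt{\frac{cx}{b}}+\frac{a}{2b}x\left(c_2+\frac{a+2c}{2}t-\log x\right)$; (3) $u=c_1e^{ct}+\frac{a+2\varepsilon c}{2b}x\left(c_2+\frac{a+2(1-\varepsilon)c}{2}t-\log x\right)$; (4) $u=\varepsilon c_1^2e^{(1-\varepsilon)ct}+4\delta c_1e^{\frac c2(1-\varepsilon)t}\sqrt{\frac{cx}{b}}+\frac{a+2\varepsilon c}{2b}x\left(c_2+\frac{a+2(1-\varepsilon)c}{2}t-\log x\right)$; (5) $u=\frac{cx}{b}\left\{c_1+\left[\varepsilon c+\frac a2\left(1+\frac{a}{2c}\right)\right]t-\frac{a}{2c}\log x+\frac{1}{2k}\left(\delta\sqrt{1-4\varepsilon k^2}-1\right)\left[\left(\frac1k-1\right)ct+\log x\right]\right\}$, where $k\neq0$ if $\varepsilon=-1$, and $0<|k|\le\frac12$ if $\varepsilon=1$.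
   Context: $\log$ denotes the natural logarithm. *)

From Stdlib Require Import Reals.
From Coquelicot Require Import Coquelicot.
Open Scope R_scope.

Definition solves (a b c : R) (u : R -> R -> R) : Prop :=
  forall t x : R, 0 < t -> 0 < x ->
    ex_derive (fun s => u s x) t /\
    (forall y, 0 < y -> ex_derive (fun z => u t z) y) /\
    ex_derive (fun y => Derive (fun z => u t z) y) x /\
    Derive (fun s => u s x) t
      + a * x ^ 2 * Derive (fun y => Derive (fun z => u t z) y) x
      + b * x ^ 3 * (Derive (fun y => Derive (fun z => u t z) y) x) ^ 2
      + c * x * Derive (fun z => u t z) x
      - c * u t x = 0.

(** Every listed solution has the form [u = p(t) + q(t) sqrt x + x (r(t) - K log x)].
    For this ansatz [x^3 u_xx^2 = (q/4 + K sqrt x)^2] and the [x log x] terms cancel,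
    so the equation splits along [1], [sqrt x], [x] into the system
    [p' = c p - b q^2/16], [q' = (a/4 + c/2 - b K/2) q], [r' = K (a + c - b K)].
    Taking [K = (a + 2 e c)/(2b)] gives (1)-(4): [q] is an exponential and [p] solves a
    linear equation driven by [q^2], which is resonant for (2).  In (5) [p = q = 0], and
    the condition on [r'] says that the coefficient [mu] of [(1/k - 1) c t + log x] is a
    root of [k mu^2 + mu + eps k = 0], which the quadratic formula provides. *)
From Stdlib Require Import Reals Lra Psatz.
From Coquelicot Require Import Coquelicot.
Open Scope R_scope.

Lemma locally_pos (x : R) : 0 < x -> locally x (fun y => 0 < y).
Proof. exact (open_gt 0 x). Qed.

Lemma solves_ext (a b c : R) (u v : R -> R -> R) :
  (forall t x, 0 < x -> u t x = v t x) -> solves a b c v -> solves a b c u.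
Proof.
  intros Huv Hv t x Ht Hx.
  destruct (Hv t x Ht Hx) as (Dt & Dx & Dxx & Heq).
  assert (Ht_eq : forall s, v s x = u s x) by (intros s; symmetry; auto).
  assert (Hx_eq : forall y, 0 < y -> locally y (fun z => v t z = u t z)).
  { intros y Hy. apply (filter_imp (fun z => 0 < z)); [|exact (locally_pos y Hy)].
    intros z Hz. symmetry. auto. }
  assert (HD : locally x
                 (fun y => Derive (fun z => v t z) y = Derive (fun z => u t z) y)).
  { apply (filter_imp (fun y => 0 < y)); [|exact (locally_pos x Hx)].
    intros y Hy. exact (Derive_ext_loc _ _ _ (Hx_eq y Hy)). }
  split; [|split; [|split]].
  - exact (ex_derive_ext _ _ _ Ht_eq Dt).
  - intros y Hy. exact (ex_derive_ext_loc _ _ _ (Hx_eq y Hy) (Dx y Hy)).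
  - exact (ex_derive_ext_loc _ _ _ HD Dxx).
  - assert (Dxx_eq : Derive (fun y => Derive (fun z => v t z) y) x
                     = Derive (fun y => Derive (fun z => u t z) y) x)
      by exact (Derive_ext_loc _ _ _ HD).
    assert (Dx_eq : Derive (fun z => v t z) x = Derive (fun z => u t z) x)
      by exact (Derive_ext_loc _ _ _ (Hx_eq x Hx)).
    rewrite (Derive_ext _ _ _ Ht_eq), Dxx_eq, Dx_eq, <- Huv in Heq by exact Hx.
    exact Heq.
Qed.

Definition sqrt_log_ansatz (p q r : R -> R) (K t x : R) : R :=
  p t + q t * sqrt x + x * (r t - K * ln x).

Section SqrtLogAnsatz.

Variables (p q r : R -> R) (K : R).

Lemma sqrt_log_ansatz_derive_x (t y : R) : 0 < y ->
  is_derive (fun z => sqrt_log_ansatz p q r K t z) y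
    (q t / (2 * sqrt y) + r t - K * ln y - K).
Proof.
  intros Hy. unfold sqrt_log_ansatz.
  assert (0 < sqrt y) by (apply sqrt_lt_R0; exact Hy).
  auto_derive.
  - repeat split; auto.
  - field. split; lra.
Qed.

Lemma sqrt_log_ansatz_derive_xx (t x : R) : 0 < x ->
  is_derive (fun y => Derive (fun z => sqrt_log_ansatz p q r K t z) y) x
    (- q t / (4 * x * sqrt x) - K / x).
Proof.
  intros Hx.
  apply is_derive_ext_loc with (fun y => q t / (2 * sqrt y) + r t - K * ln y - K).
  { apply (filter_imp (fun y => 0 < y)); [|exact (locally_pos x Hx)].
    intros y Hy. symmetry. apply is_derive_unique, sqrt_log_ansatz_derive_x, Hy. }
  assert (Hs : 0 < sqrt x) by (apply sqrt_lt_R0; exact Hx).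
  assert (Hss : sqrt x * sqrt x = x) by (apply sqrt_sqrt; lra).
  auto_derive.
  - repeat split; lra.
  - set (s := sqrt x) in *. rewrite <- Hss. field. lra.
Qed.

Variables (a b c : R).
Hypothesis Hp : forall t, is_derive p t (c * p t - b * q t ^ 2 / 16).
Hypothesis Hq : forall t, is_derive q t ((a / 4 + c / 2 - b * K / 2) * q t).
Hypothesis Hr : forall t, is_derive r t (K * (a + c - b * K)).

Lemma sqrt_log_ansatz_derive_t (t x : R) :
  is_derive (fun s => sqrt_log_ansatz p q r K s x) t
    (c * p t - b * q t ^ 2 / 16 + (a / 4 + c / 2 - b * K / 2) * q t * sqrt x
     + x * (K * (a + c - b * K))).
Proof.
  unfold sqrt_log_ansatz.
  auto_derive.
  - repeat split; eexists; eauto.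
  - replace (Derive (fun s => p s) t) with (c * p t - b * q t ^ 2 / 16)
      by (symmetry; apply is_derive_unique, Hp).
    replace (Derive (fun s => q s) t) with ((a / 4 + c / 2 - b * K / 2) * q t)
      by (symmetry; apply is_derive_unique, Hq).
    replace (Derive (fun s => r s) t) with (K * (a + c - b * K))
      by (symmetry; apply is_derive_unique, Hr).
    ring.
Qed.

Lemma solves_sqrt_log_ansatz : solves a b c (sqrt_log_ansatz p q r K).
Proof.
  intros t x Ht Hx.
  pose proof (sqrt_log_ansatz_derive_t t x) as Dt.
  pose proof (sqrt_log_ansatz_derive_x t x Hx) as Dx.
  pose proof (sqrt_log_ansatz_derive_xx t x Hx) as Dxx.
  split; [eexists; exact Dt|].
  split; [intros y Hy; eexists; exact (sqrt_log_ansatz_derive_x t y Hy)|].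
  split; [eexists; exact Dxx|].
  assert (Et : Derive (fun s => sqrt_log_ansatz p q r K s x) t
               = c * p t - b * q t ^ 2 / 16 + (a / 4 + c / 2 - b * K / 2) * q t * sqrt x
                 + x * (K * (a + c - b * K)))
    by exact (is_derive_unique _ _ _ Dt).
  assert (Ex : Derive (fun z => sqrt_log_ansatz p q r K t z) x
               = q t / (2 * sqrt x) + r t - K * ln x - K)
    by exact (is_derive_unique _ _ _ Dx).
  assert (Exx : Derive (fun y => Derive (fun z => sqrt_log_ansatz p q r K t z) y) x
                = - q t / (4 * x * sqrt x) - K / x)
    by exact (is_derive_unique _ _ _ Dxx).
  rewrite Et, Ex, Exx.
  unfold sqrt_log_ansatz.
  assert (Hs : 0 < sqrt x) by (apply sqrt_lt_R0; exact Hx).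
  assert (Hss : sqrt x * sqrt x = x) by (apply sqrt_sqrt; lra).
  set (s := sqrt x) in *. rewrite <- Hss. field. lra.
Qed.

End SqrtLogAnsatz.

Section Families.

Variables (a b c : R).
Hypotheses (hb : 0 < b) (hc : 0 < c).

Lemma solves_exp_sqrt_family (e m c2 : R) (p : R -> R) :
  (forall t, is_derive p t (c * p t - c * m ^ 2 * exp ((1 - e) * c * t))) ->
  solves a b c (fun t x =>
    p t + 4 * m * exp (c / 2 * (1 - e) * t) * sqrt (c * x / b)
    + (a + 2 * e * c) / (2 * b) * x * (c2 + (a + 2 * (1 - e) * c) / 2 * t - ln x)).
Proof.
  intros Hp.
  set (K := (a + 2 * e * c) / (2 * b)).
  set (E := fun t => exp (c / 2 * (1 - e) * t)).
  assert (Hcb : 0 <= c / b) by (apply Rlt_le, Rdiv_lt_0_compat; assumption).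
  assert (HE : forall t, E t ^ 2 = exp ((1 - e) * c * t)).
  { intros t. unfold E.
    replace ((1 - e) * c * t) with (c / 2 * (1 - e) * t + c / 2 * (1 - e) * t) by field.
    rewrite exp_plus. ring. }
  apply solves_ext with
    (sqrt_log_ansatz p (fun t => 4 * m * sqrt (c / b) * E t)
       (fun t => K * (c2 + (a + 2 * (1 - e) * c) / 2 * t)) K).
  { intros t x _. unfold sqrt_log_ansatz, E.
    replace (c * x / b) with (c / b * x) by (field; lra).
    rewrite sqrt_mult_alt by exact Hcb.
    ring. }
  apply solves_sqrt_log_ansatz.
  - intros t.
    assert (Hq2 : b * (4 * m * sqrt (c / b) * E t) ^ 2 / 16
                  = c * m ^ 2 * exp ((1 - e) * c * t)).
    { rewrite <- HE, !Rpow_mult_distr, pow2_sqrt by exact Hcb. field. lra. }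
    rewrite Hq2. apply Hp.
  - intros t. unfold E. auto_derive; [exact I|]. unfold K. field. lra.
  - intros t. auto_derive; [exact I|]. unfold K. field. lra.
Qed.

Lemma solves_linear_family (e c1 c2 : R) :
  solves a b c (fun t x =>
    c1 * exp (c * t)
    + (a + 2 * e * c) / (2 * b) * x * (c2 + (a + 2 * (1 - e) * c) / 2 * t - ln x)).
Proof.
  apply solves_ext with (fun t x =>
    c1 * exp (c * t) + 4 * 0 * exp (c / 2 * (1 - e) * t) * sqrt (c * x / b)
    + (a + 2 * e * c) / (2 * b) * x * (c2 + (a + 2 * (1 - e) * c) / 2 * t - ln x)).
  { intros t x _. ring. }
  apply solves_exp_sqrt_family.
  intros t. auto_derive; [exact I|]. ring.
Qed.

Lemma solves_resonant_family (delta c1 c2 : R) : delta ^ 2 = 1 ->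
  solves a b c (fun t x =>
    (c1 - c * t) * exp (c * t) + 4 * delta * exp (c / 2 * t) * sqrt (c * x / b)
    + a / (2 * b) * x * (c2 + (a + 2 * c) / 2 * t - ln x)).
Proof.
  intros Hdelta.
  apply solves_ext with (fun t x =>
    (c1 - c * t) * exp (c * t) + 4 * delta * exp (c / 2 * (1 - 0) * t) * sqrt (c * x / b)
    + (a + 2 * 0 * c) / (2 * b) * x * (c2 + (a + 2 * (1 - 0) * c) / 2 * t - ln x)).
  { intros t x _. cbv beta.
    replace (c / 2 * (1 - 0) * t) with (c / 2 * t) by ring.
    field. lra. }
  apply solves_exp_sqrt_family.
  intros t. rewrite Hdelta. replace ((1 - 0) * c * t) with (c * t) by ring.
  auto_derive; [exact I|]. ring.
Qed.

Lemma solves_sqrt_family (eps delta c1 c2 : R) :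
  (eps = 1 \/ eps = -1) -> delta ^ 2 = 1 ->
  solves a b c (fun t x =>
    eps * c1 ^ 2 * exp ((1 - eps) * c * t)
    + 4 * delta * c1 * exp (c / 2 * (1 - eps) * t) * sqrt (c * x / b)
    + (a + 2 * eps * c) / (2 * b) * x * (c2 + (a + 2 * (1 - eps) * c) / 2 * t - ln x)).
Proof.
  intros Heps Hdelta.
  apply solves_ext with (fun t x =>
    eps * c1 ^ 2 * exp ((1 - eps) * c * t)
    + 4 * (delta * c1) * exp (c / 2 * (1 - eps) * t) * sqrt (c * x / b)
    + (a + 2 * eps * c) / (2 * b) * x * (c2 + (a + 2 * (1 - eps) * c) / 2 * t - ln x)).
  { intros t x _. ring. }
  apply solves_exp_sqrt_family.
  intros t. rewrite Rpow_mult_distr, Hdelta.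
  auto_derive; [exact I|]. destruct Heps as [-> | ->]; ring.
Qed.

Lemma solves_log_family (eps k mu c1 : R) : k <> 0 -> k * mu ^ 2 + mu + eps * k = 0 ->
  solves a b c (fun t x =>
    c * x / b *
      (c1 + (eps * c + a / 2 * (1 + a / (2 * c))) * t - a / (2 * c) * ln x
       + mu * ((1 / k - 1) * c * t + ln x))).
Proof.
  intros Hk Hmu.
  set (K := (a / 2 - c * mu) / b).
  apply solves_ext with
    (sqrt_log_ansatz (fun _ => 0) (fun _ => 0)
       (fun t => c / b * (c1 + (eps * c + a / 2 * (1 + a / (2 * c))) * t
                          + mu * ((1 / k - 1) * c * t))) K).
  { intros t x _. unfold sqrt_log_ansatz, K. field. split; lra. }
  apply solves_sqrt_log_ansatz.
  - intros t. auto_derive; [exact I|]. field.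
  - intros t. auto_derive; [exact I|]. ring.
  - intros t. auto_derive; [exact I|].
    replace eps with (eps * k / k) by (field; exact Hk).
    replace (eps * k) with (- (k * mu ^ 2 + mu)) by lra.
    unfold K. field. repeat split; lra.
Qed.

End Families.

Lemma quadratic_root (A B C D d : R) :
  A <> 0 -> 0 <= D -> D = B ^ 2 - 4 * A * C -> d ^ 2 = 1 ->
  let x := 1 / (2 * A) * (d * sqrt D - B) in A * x ^ 2 + B * x + C = 0.
Proof.
  intros HA HD HDisc Hd x.
  assert (Hx : 2 * A * x + B = d * sqrt D) by (unfold x; field; exact HA).
  replace (A * x ^ 2 + B * x + C) with (((2 * A * x + B) ^ 2 - (B ^ 2 - 4 * A * C)) / (4 * A))
    by (field; exact HA).
  rewrite Hx, <- HDisc, Rpow_mult_distr, Hd, pow2_sqrt by exact HD.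
  field. exact HA.
Qed.

Theorem mainTheorem6 (a b c : R) (ha : 0 < a) (hb : 0 < b) (hc : 0 < c) :
  forall (c1 c2 eps delta : R),
    (eps = 1 \/ eps = -1) -> (delta = 1 \/ delta = -1) ->
    (* (1) *)
    solves a b c (fun t x =>
      c1 * exp (c * t) + a / (2 * b) * x * (c2 + (a + 2 * c) / 2 * t - ln x)) /\
    (* (2) *)
    solves a b c (fun t x =>
      (c1 - c * t) * exp (c * t) + 4 * delta * exp (c / 2 * t) * sqrt (c * x / b)
      + a / (2 * b) * x * (c2 + (a + 2 * c) / 2 * t - ln x)) /\
    (* (3) *)
    solves a b c (fun t x =>
      c1 * exp (c * t)
      + (a + 2 * eps * c) / (2 * b) * x
          * (c2 + (a + 2 * (1 - eps) * c) / 2 * t - ln x)) /\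
    (* (4) *)
    solves a b c (fun t x =>
      eps * c1 ^ 2 * exp ((1 - eps) * c * t)
      + 4 * delta * c1 * exp (c / 2 * (1 - eps) * t) * sqrt (c * x / b)
      + (a + 2 * eps * c) / (2 * b) * x
          * (c2 + (a + 2 * (1 - eps) * c) / 2 * t - ln x)) /\
    (* (5) *)
    (forall k : R,
       (eps = -1 -> k <> 0) -> (eps = 1 -> 0 < Rabs k <= 1 / 2) ->
       solves a b c (fun t x =>
         c * x / b *
           (c1 + (eps * c + a / 2 * (1 + a / (2 * c))) * t
            - a / (2 * c) * ln x
            + 1 / (2 * k) * (delta * sqrt (1 - 4 * eps * k ^ 2) - 1)
                * ((1 / k - 1) * c * t + ln x)))).
Proof.
  intros c1 c2 eps delta Heps Hdelta.
  assert (Hdelta2 : delta ^ 2 = 1) by (destruct Hdelta as [-> | ->]; ring).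
  split; [|split; [|split; [|split]]].
  - apply solves_ext with (2 := solves_linear_family a b c hb hc 0 c1 c2).
    intros t x _. field. lra.
  - exact (solves_resonant_family a b c hb hc delta c1 c2 Hdelta2).
  - exact (solves_linear_family a b c hb hc eps c1 c2).
  - exact (solves_sqrt_family a b c hb hc eps delta c1 c2 Heps Hdelta2).
  - intros k Hk_neg Hk_pos.
    assert (Hk : k <> 0).
    { destruct Heps as [He | He]; [|exact (Hk_neg He)].
      intros ->. rewrite Rabs_R0 in Hk_pos. destruct (Hk_pos He). lra. }
    assert (Hdisc : 0 <= 1 - 4 * eps * k ^ 2).
    { destruct Heps as [He | He]; subst eps; [|nra].
      rewrite <- pow2_abs. destruct (Hk_pos eq_refl). nra. }
    apply solves_log_family; [exact hb | exact hc | exact Hk |].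
    pose proof (quadratic_root k 1 (eps * k) _ delta Hk Hdisc ltac:(ring) Hdelta2)
      as Hroot.
    cbv zeta in Hroot. lra.
Qed.
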